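(* Let $\mathbf K$ be a commutative field, $p,q\in\mathbb N$ and $A\in\mathrm{Rec}_{p\times q}(\mathbf K)$. Then the set of values $\{A[U,W]:(U,W)\in\mathcal M_{p\times q}\}$ is contained in a subring $\tilde{\mathbf K}\subset\mathbf K$ which is finitely generated as a ring.
   Context: $\mathcal M_{p\times q}$ is the set of pairs $(U,W)$ of words of common length with $U$ over $\{0,\dots,p-1\}$, $W$ over $\{0,\dots,q-1\}$. For $A:\mathcal M_{p\times q}\to\mathbf K$ (values $A[U,W]$), $(\rho(S,T)A)[U,W]=A[US,WT]$. $\mathrm{Rec}_{p\times q}(\mathbf K)$ is the set of $A$ whose linear span of $\{\rho(S,T)A\}$ is finite-dimensional. *)

From mathcomp Require Import all_boot all_order all_algebra.
Set Implicit Arguments. Unset Strict Implicit. Unset Printing Implicit Defensive.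
Import GRing.Theory.
Local Open Scope ring_scope.

(* A function A : M_{p x q} -> K is represented by a function on all pairs of
   words (U, W) with U over 'I_p and W over 'I_q; only its values on pairs of
   common length (size U = size W) are meaningful. *)
Definition rho (K : fieldType) (p q : nat) (S : seq 'I_p) (T : seq 'I_q)
  (A : seq 'I_p -> seq 'I_q -> K) : seq 'I_p -> seq 'I_q -> K :=
  fun U W => A (U ++ S) (W ++ T).

(* A is in Rec_{p x q}(K): the linear span of {rho(S,T) A : (S,T) in M_{p x q}}
   (as functions on M_{p x q}) is finite dimensional, i.e. contained in the
   span of finitely many functions B_0, ..., B_{n-1} on M_{p x q}. *)
Definition Rec (K : fieldType) (p q : nat) (A : seq 'I_p -> seq 'I_q -> K) : Prop :=
  exists (n : nat) (B : 'I_n -> seq 'I_p -> seq 'I_q -> K),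
    forall (S : seq 'I_p) (T : seq 'I_q), size S = size T ->
      exists c : 'I_n -> K, forall (U : seq 'I_p) (W : seq 'I_q), size U = size W ->
        rho S T A U W = \sum_(i < n) c i * B i U W.

Inductive in_gen_subring (K : fieldType) (gens : seq K) : K -> Prop :=
  | gen_mem : forall x, x \in gens -> in_gen_subring gens x
  | gen_one : in_gen_subring gens 1
  | gen_opp : forall x, in_gen_subring gens x -> in_gen_subring gens (- x)
  | gen_add : forall x y, in_gen_subring gens x -> in_gen_subring gens y ->
                in_gen_subring gens (x + y)
  | gen_mul : forall x y, in_gen_subring gens x -> in_gen_subring gens y ->
                in_gen_subring gens (x * y).

(* Let H[x, y] := A[x y] be the Hankel matrix of A, indexed by pairs of words of
   common length.  Since every rho(S, T) A lies in an n-dimensional space, H has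
   rank at most n, so it has a nonsingular r x r submatrix M, with rows pi and
   columns sg, of maximal order; by the Schur complement formula every entry
   then factors as H[x, y] = H[x, sg] M^-1 H[pi, y].  Taking y = (a, b) sg_j and
   inducting on the length of x = (U, W) shows that all the H[x, sg_j], hence
   all A[U, W] = H[x, 1], lie in the ring generated by the finitely many values
   H[1, sg_j], M^-1_jk, H[pi_k, (a, b) sg_j] and H[pi_k, 1]. *)

From mathcomp Require Import all_boot all_order all_algebra.
From mathcomp Require Import boolp.
Set Implicit Arguments. Unset Strict Implicit. Unset Printing Implicit Defensive.
Import GRing.Theory.
Local Open Scope ring_scope.

Lemma ex_maxn_Prop (P : nat -> Prop) (n : nat) :
  P 0%N -> (forall r, P r -> (r <= n)%N) -> exists2 r, P r & ~ P r.+1.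
Proof.
move=> P0 Pn; have P0b : exists i, `[< P i >] by exists 0%N; exact/asboolP.
have Pnb (i : nat) : `[< P i >] -> (i <= n)%N by move/asboolP; exact: Pn.
case: (ex_maxnP P0b Pnb) => r /asboolP Pr r_max; exists r => // /asboolP /r_max.
by rewrite ltnn.
Qed.

Lemma unitmx_block_schur (K : fieldType) r (M : 'M[K]_r) (c : 'cV_r) (u : 'rV_r) (d : K) :
  M \in unitmx ->
  (block_mx M c u d%:M \in unitmx) = (d != (u *m invmx M *m c) 0 0).
Proof.
move=> M_unit.
set L := block_mx 1%:M 0 (- (u *m invmx M)) 1%:M.
have L_unit : L \in unitmx by rewrite unitmxE det_lblock !det1 mulr1 unitr1.
rewrite -[LHS]andTb -L_unit -unitmx_mul mulmx_block !mul1mx !mul0mx !addr0.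
rewrite !mulNmx -[_ *m M]mulmxA mulVmx // mulmx1 addNr.
rewrite unitmxE det_ublock unitrM -unitmxE M_unit.
have -> : - (u *m invmx M *m c) + d%:M = (d - (u *m invmx M *m c) 0 0)%:M :> 'M_1.
  by apply/matrixP => i j; rewrite !ord1 !mxE eqxx !mulr1n addrC.
by rewrite det_scalar1 unitfE subr_eq0.
Qed.

Lemma in_gen_subring_sum (K : fieldType) (gens : seq K) (I : finType) (F : I -> K) :
  (forall i, in_gen_subring gens (F i)) -> in_gen_subring gens (\sum_i F i).
Proof.
move=> F_gen; apply: big_ind => //; last exact: gen_add.
by rewrite -(subrr 1); apply: gen_add; [|apply: gen_opp]; apply: gen_one.
Qed.

Section HankelMatrix.

Variables (K : fieldType) (p q : nat) (A : seq 'I_p -> seq 'I_q -> K).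

Definition balanced (x : seq 'I_p * seq 'I_q) : bool := size x.1 == size x.2.

Definition hankel (x y : seq 'I_p * seq 'I_q) : K := A (x.1 ++ y.1) (x.2 ++ y.2).

Definition hankel_submx r (pi sg : 'I_r -> seq 'I_p * seq 'I_q) : 'M[K]_r :=
  \matrix_(i, j) hankel (pi i) (sg j).

Definition nonsingular_hankel_minor r : Prop :=
  exists pi sg : 'I_r -> seq 'I_p * seq 'I_q,
    [/\ forall i, balanced (pi i), forall j, balanced (sg j)
      & hankel_submx pi sg \in unitmx].

Lemma nonsingular_hankel_minor0 : nonsingular_hankel_minor 0.
Proof.
exists (fun=> ([::], [::])), (fun=> ([::], [::])).
by split=> //; rewrite unitmxE det_mx00 unitr1.
Qed.

Lemma Rec_hankel_minor_bounded :
  Rec A -> exists n, forall r, nonsingular_hankel_minor r -> (r <= n)%N.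
Proof.
move=> [n [B A_span]]; exists n => r [pi [sg [pi_bal sg_bal M_unit]]].
pose spans j (c : 'I_n -> K) := forall U W, size U = size W ->
  rho (sg j).1 (sg j).2 A U W = \sum_(i < n) c i * B i U W.
have [c A_sg] : exists c : 'I_r -> 'I_n -> K, forall j, spans j (c j).
  apply: (@fin_all_exists _ (fun=> 'I_n -> K) spans) => j.
  by apply: A_span; apply/eqP; apply: sg_bal.
rewrite -(mxrank_unit M_unit).
have -> : hankel_submx pi sg =
    (\matrix_(k, i) B i (pi k).1 (pi k).2) *m \matrix_(i, j) c j i.
  apply/matrixP => k j; rewrite !mxE [hankel _ _]A_sg; last exact/eqP/pi_bal.
  by apply: eq_bigr => i _; rewrite !mxE mulrC.
exact: leq_trans (mxrankM_maxl _ _) (rank_leq_col _).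
Qed.

Lemma hankel_factorization r (pi sg : 'I_r -> seq 'I_p * seq 'I_q) :
    (forall i, balanced (pi i)) -> (forall j, balanced (sg j)) ->
    hankel_submx pi sg \in unitmx -> ~ nonsingular_hankel_minor (r + 1) ->
  forall x y, balanced x -> balanced y ->
  hankel x y = \sum_(j < r) \sum_(k < r)
    hankel x (sg j) * invmx (hankel_submx pi sg) j k * hankel (pi k) y.
Proof.
move=> pi_bal sg_bal M_unit not_minor x y x_bal y_bal.
set M := hankel_submx pi sg.
set u : 'rV_r := \row_j hankel x (sg j).
set c : 'cV_r := \col_k hankel (pi k) y.
have -> : \sum_(j < r) \sum_(k < r) hankel x (sg j) * invmx M j k * hankel (pi k) y
    = (u *m invmx M *m c) 0 0.
  rewrite !mxE exchange_big; apply: eq_bigr => k _.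
  by rewrite !mxE mulr_suml; apply: eq_bigr => j _; rewrite !mxE.
apply/eqP; apply/negPn/negP => hankel_neq; apply: not_minor.
pose pi' (i : 'I_(r + 1)) := if split i is inl k then pi k else x.
pose sg' (j : 'I_(r + 1)) := if split j is inl k then sg k else y.
exists pi', sg'; split.
- by move=> i; rewrite /pi'; case: split.
- by move=> j; rewrite /sg'; case: split.
have -> : hankel_submx pi' sg' = block_mx M c u (hankel x y)%:M.
  apply/matrixP => i j; rewrite /block_mx /col_mx /row_mx !mxE /pi' /sg'.
  case: (split i) => [k|k]; rewrite !mxE; case: (split j) => [l|l]; rewrite !mxE //.
  by rewrite !ord1 eqxx mulr1n.
by rewrite unitmx_block_schur.
Qed.

Section FiniteGeneration.

Variables (r : nat) (pi sg : 'I_r -> seq 'I_p * seq 'I_q) (N : 'M[K]_r).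
Hypothesis sg_bal : forall j, balanced (sg j).
Hypothesis hankel_expand : forall x y, balanced x -> balanced y ->
  hankel x y = \sum_(j < r) \sum_(k < r) hankel x (sg j) * N j k * hankel (pi k) y.

Definition hankel_gens : seq K :=
  [seq hankel ([::], [::]) (sg j) | j : 'I_r]
  ++ [seq N jk.1 jk.2 | jk : 'I_r * 'I_r]
  ++ [seq hankel (pi t.1.1) (t.2.1 :: (sg t.1.2).1, t.2.2 :: (sg t.1.2).2)
       | t : 'I_r * 'I_r * ('I_p * 'I_q)]
  ++ [seq hankel (pi k) ([::], [::]) | k : 'I_r].

Lemma hankel_expand_in_gen x y : balanced x -> balanced y ->
    (forall j, in_gen_subring hankel_gens (hankel x (sg j))) ->
    (forall k, in_gen_subring hankel_gens (hankel (pi k) y)) ->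
  in_gen_subring hankel_gens (hankel x y).
Proof.
move=> x_bal y_bal x_gen y_gen; rewrite hankel_expand //.
apply: in_gen_subring_sum => j; apply: in_gen_subring_sum => k.
apply: gen_mul; [apply: gen_mul; [exact: x_gen | apply: gen_mem] | exact: y_gen].
by rewrite !mem_cat; apply/or4P/Or42/imageP; exists (j, k).
Qed.

Lemma hankel_sg_in_gen U W : size U = size W ->
  forall j, in_gen_subring hankel_gens (hankel (U, W) (sg j)).
Proof.
elim/last_ind: U W => [|U a IH_U] W.
  case: W => // _ j; apply: gen_mem.
  by rewrite !mem_cat; apply/or4P/Or41/imageP; exists j.
case/lastP: W => [|W b]; rewrite !size_rcons // => /succn_inj UW_size j.
have -> : hankel (rcons U a, rcons W b) (sg j)
    = hankel (U, W) (a :: (sg j).1, b :: (sg j).2) by rewrite /hankel /= !cat_rcons.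
apply: hankel_expand_in_gen; first by rewrite /balanced UW_size.
- by rewrite /balanced /= eqSS; apply: sg_bal.
- exact: IH_U.
- move=> k; apply: gen_mem.
  by rewrite !mem_cat; apply/or4P/Or43/imageP; exists (k, j, (a, b)).
Qed.

Lemma hankel_in_gen U W : size U = size W -> in_gen_subring hankel_gens (A U W).
Proof.
move=> UW_size; have -> : A U W = hankel (U, W) ([::], [::]) by rewrite /hankel !cats0.
apply: hankel_expand_in_gen => //; first by rewrite /balanced UW_size.
- exact: hankel_sg_in_gen.
- by move=> k; apply: gen_mem; rewrite !mem_cat; apply/or4P/Or44/imageP; exists k.
Qed.

End FiniteGeneration.

End HankelMatrix.

Theorem mainTheorem8 (K : fieldType) (p q : nat) (A : seq 'I_p -> seq 'I_q -> K) :
  Rec A ->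
  exists gens : seq K,
    forall (U : seq 'I_p) (W : seq 'I_q), size U = size W -> in_gen_subring gens (A U W).
Proof.
move=> A_rec; have [n minor_bound] := Rec_hankel_minor_bounded A_rec.
have [r [pi [sg [pi_bal sg_bal M_unit]]]] :=
  ex_maxn_Prop (nonsingular_hankel_minor0 A) minor_bound.
rewrite -addn1 => maximal_minor.
exists (hankel_gens A pi sg (invmx (hankel_submx A pi sg))).
exact/hankel_in_gen/hankel_factorization.
Qed.
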